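(* Let $\mathcal{L}_1,\mathcal{L}_2$ be objects of $\mathbf{Cal^0_{Sym}}$. Then $\mathcal{L}_1\circledast\mathcal{L}_2$ is a simple closure space on $\Sigma_1\times\Sigma_2$ (in particular a complete atomistic lattice whose atoms are the singletons), $\mathcal{L}_1\circledast\mathcal{L}_2$ is an object of $\mathbf{Cal^0_{Sym}}$, and the set of coatoms of $\mathcal{L}_1\circledast\mathcal{L}_2$ is exactly $\Sigma'_\circledast$.
   Context: A simple closure space on a nonempty set $\Sigma$ is a family $\mathcal{L}\subseteq 2^\Sigma$ containing $\emptyset$, $\Sigma$ and all singletons and closed under arbitrary intersections (ordered by inclusion). For a complete lattice $\mathcal{L}_i$: $\Sigma_i,\Sigma_i'$ are its sets of atoms and coatoms, $\Sigma[a]$ (resp. $\Sigma'[a]$) the atoms below (resp. coatoms above) $a$, and $\mathsf{Cl}(\omega)=\{\Sigma[a]\,;\,a\in\omega\}$. $\mathbf{Cal^0_{Sym}}$: objects are complete atomistic coatomistic lattices with $\Sigma[x]\cup\Sigma[y]\ne\Sigma$ for all coatoms $x,y$ and $\Sigma'[p]\cup\Sigma'[q]\ne\Sigma'$ for all atoms $p,q$. For $R\subseteq\Sigma_1\times\Sigma_2$, $p=(p_1,p_2)$: $R_1[p]:=\{q_1;(q_1,p_2)\in R\}$, $R_2[p]:=\{q_2;(p_1,q_2)\in R\}$. $\Sigma'_\circledast:=\{R\subsetneqq\Sigma_1\times\Sigma_2\,;\,R_1[p]\in\mathsf{Cl}(\Sigma_1'\cup\{1\}),\ R_2[p]\in\mathsf{Cl}(\Sigma_2'\cup\{1\})\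 \forall p\}$, and $\mathcal{L}_1\circledast\mathcal{L}_2:=\{\bigcap\omega\,;\,\omega\subseteq\Sigma'_\circledast\cup\{\Sigma_1\times\Sigma_2\}\}$ ordered by inclusion. *)

From mathcomp Require Import all_boot.
From mathcomp Require Import boolp classical_sets.
Set Implicit Arguments. Unset Strict Implicit. Unset Printing Implicit Defensive.
Local Open Scope classical_set_scope.

Section Poset.
Variables (T : Type) (le : T -> T -> Prop).

Definition is_partial_order : Prop :=
  [/\ (forall x, le x x),
      (forall x y, le x y -> le y x -> x = y) &
      (forall x y z, le x y -> le y z -> le x z)].

Definition is_lub (S : set T) (s : T) : Prop :=
  (forall x, S x -> le x s) /\ (forall u, (forall x, S x -> le x u) -> le s u).

Definition is_glb (S : set T) (s : T) : Prop :=
  (forall x, S x -> le s x) /\ (forall u, (forall x, S x -> le u x) -> le u s).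

Definition complete_lattice : Prop :=
  [/\ is_partial_order,
      (forall S : set T, exists s, is_lub S s) &
      (forall S : set T, exists s, is_glb S s)].

Definition is_bot (x : T) : Prop := forall y, le x y.
Definition is_top (x : T) : Prop := forall y, le y x.

Definition atom (a : T) : Prop :=
  ~ is_bot a /\ forall x, le x a -> is_bot x \/ x = a.
Definition coatom (a : T) : Prop :=
  ~ is_top a /\ forall x, le a x -> is_top x \/ x = a.

Definition atoms : set T := [set a | atom a].
Definition coatoms : set T := [set a | coatom a].

Definition atoms_below (a : T) : set T := [set p | atom p /\ le p a].
Definition coatoms_above (a : T) : set T := [set x | coatom x /\ le a x].

Definition atomistic : Prop := forall a, is_lub (atoms_below a) a.
Definition coatomistic : Prop := forall a, is_glb (coatoms_above a) a.

Definition Cal0Sym : Prop :=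
  [/\ complete_lattice, atomistic, coatomistic,
      (forall x y, coatom x -> coatom y ->
         atoms_below x `|` atoms_below y <> atoms) &
      (forall p q, atom p -> atom q ->
         coatoms_above p `|` coatoms_above q <> coatoms)].

Definition Cl_coatoms_top : set (set T) :=
  [set S | exists a, (coatom a \/ is_top a) /\ S = atoms_below a].

End Poset.

Definition simple_closure_space (X : Type) (U : set X) (F : set (set X)) : Prop :=
  [/\ (forall A, F A -> A `<=` U),
      F set0, F U,
      (forall x, U x -> F [set x]) &
      (forall G : set (set X), G `<=` F ->
         F [set p | U p /\ forall A, G A -> A p])].

Section Tensor.
Variables (T1 T2 : Type) (le1 : T1 -> T1 -> Prop) (le2 : T2 -> T2 -> Prop).

Definition Sig12 : set (T1 * T2) := atoms le1 `*` atoms le2.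

Definition R1 (R : set (T1 * T2)) (p : T1 * T2) : set T1 := [set q1 | R (q1, p.2)].
Definition R2 (R : set (T1 * T2)) (p : T1 * T2) : set T2 := [set q2 | R (p.1, q2)].

Definition tensor_coatoms : set (set (T1 * T2)) :=
  [set R | [/\ R `<=` Sig12, R <> Sig12 &
     forall p, Sig12 p ->
       Cl_coatoms_top le1 (R1 R p) /\ Cl_coatoms_top le2 (R2 R p)]].

(* L1 [*] L2 = { /\ omega ; omega subset of Sigma'_[*] u {Sigma1 x Sigma2} },
   the empty intersection being Sigma1 x Sigma2 *)
Definition tensor : set (set (T1 * T2)) :=
  [set X | exists omega : set (set (T1 * T2)),
     omega `<=` tensor_coatoms `|` [set Sig12] /\
     X = [set p | Sig12 p /\ forall R, omega R -> R p]].

Definition tensor_carrier := {X : set (T1 * T2) | tensor X}.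
Definition tensor_le (X Y : tensor_carrier) : Prop := proj1_sig X `<=` proj1_sig Y.

End Tensor.

From mathcomp Require Import all_boot.
From mathcomp Require Import boolp classical_sets.
Set Implicit Arguments. Unset Strict Implicit. Unset Printing Implicit Defensive.
Local Open Scope classical_set_scope.

(* L1 [*] L2 consists of the intersections of members of Sigma'_[*], so a set of
   pairs of atoms belongs to it exactly when every pair of atoms outside it is cut
   off by a member of Sigma'_[*] containing it.  Hence it is a closure system, and
   completeness, atomisticity and the description of its atoms hold for any closure
   system ordered by inclusion.  For coatoms c1, c2 the "cross"
   {(q1, q2) | q1 <= c1 or q2 <= c2} lies in Sigma'_[*] and cuts off single pairs;
   this puts the empty set and the singletons into L1 [*] L2 and, with the
   symmetry axiom on atoms of the factors, yields that axiom for the product.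
   Rows and columns of a member of Sigma'_[*] are the atom sets of coatoms or of 1;
   since no two coatoms of a factor cover its atoms, no member of Sigma'_[*] is
   strictly contained in another and no two of them cover Sigma1 x Sigma2.  So
   Sigma'_[*] is exactly the set of coatoms, the product is coatomistic, and it
   satisfies the symmetry axiom on coatoms. *)

Lemma lub_of_glb (T : Type) (le : T -> T -> Prop) :
  (forall S : set T, exists s, is_glb le S s) -> forall S : set T, exists s, is_lub le S s.
Proof.
move=> glbs S; have [s [s_lb s_glb]] := glbs [set u | forall x, S x -> le x u].
by exists s; split => [x Sx | u u_ub]; [apply: s_glb => u; apply | exact: s_lb].
Qed.

Lemma subset_neq_witness (T : Type) (A B : set T) :
  A `<=` B -> A <> B -> exists2 x, B x & ~ A x.
Proof.
move=> AB nAB; apply: contrapT => nx; apply: nAB; apply/seteqP; split => // x Bx.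
by apply: contrapT => nAx; apply: nx; exists x.
Qed.

Section ClosureSpace.
Variables (X : Type) (U : set X) (F : set (set X)).
Hypothesis F_closure : simple_closure_space U F.

Local Notation C := {A : set X | F A}.

Definition incl_le (A B : C) : Prop := proj1_sig A `<=` proj1_sig B.

Lemma closed_sub A : F A -> A `<=` U.
Proof. by case: F_closure => + _ _ _ _; apply. Qed.

Lemma closed_set1 p : U p -> F [set p].
Proof. by case: F_closure => _ _ _ + _; apply. Qed.

Definition point p (Up : U p) : C := exist _ [set p] (closed_set1 Up).

Lemma incl_eq (A B : C) : proj1_sig A = proj1_sig B -> A = B.
Proof. by case: A B => [A FA] [B FB] /= eqAB; exact: eq_exist. Qed.

Lemma incl_topP (A : C) : is_top incl_le A <-> proj1_sig A = U.
Proof.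
case: F_closure => _ _ FU _ _; split => [A_top | A_U B].
  by apply/seteqP; split; [exact: closed_sub (proj2_sig A) | exact: A_top (exist _ U FU)].
by rewrite /incl_le A_U; exact: closed_sub (proj2_sig B).
Qed.

Lemma incl_botP (A : C) : is_bot incl_le A <-> proj1_sig A = set0.
Proof.
case: F_closure => _ F0 _ _ _; split => [A_bot | A0 B]; last by rewrite /incl_le A0.
by apply/seteqP; split => // x /(A_bot (exist _ set0 F0)).
Qed.

Lemma incl_complete_lattice : complete_lattice incl_le.
Proof.
have glbs (S : set C) : exists s, is_glb incl_le S s.
  case: F_closure => _ _ _ _ Fcap.
  pose G := [set A | exists2 B, S B & A = proj1_sig B].
  have GF : G `<=` F by move=> A [B _ ->]; exact: proj2_sig B.
  exists (exist _ _ (Fcap G GF)); split => [B SB p [_ /(_ (proj1_sig B))] | B B_lb p Bp].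
    by apply; exists B.
  split; first exact: closed_sub (proj2_sig B) _ Bp.
  by move=> A [D SD ->]; exact: B_lb D SD p Bp.
split; [split | exact: lub_of_glb | exact: glbs].
- by move=> A.
- by move=> A B AB BA; apply: incl_eq; apply/seteqP.
- by move=> A B D AB BD x /AB /BD.
Qed.

Lemma incl_atomP (A : C) : atom incl_le A <-> exists p, U p /\ proj1_sig A = [set p].
Proof.
split => [[A_nbot A_min] | [p [Up A_p]]].
  have [p Ap] : exists p, proj1_sig A p.
    by apply: contrapT => /forallNP A0; apply: A_nbot; apply/incl_botP/seteqP; split.
  have Up := closed_sub (proj2_sig A) Ap.
  exists p; split => //; case: (A_min (point Up)) => [x /= -> // | /incl_botP /= p0 | <- //].
  by have : [set p] p by []; rewrite p0.
split => [/incl_botP | B BA]; first by rewrite A_p => p0; have : [set p] p by []; rewrite p0.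
have [[q Bq] | B0] := pselect (exists q, proj1_sig B q); last first.
  by left; apply/incl_botP/seteqP; split => // q Bq; apply: B0; exists q.
right; apply: incl_eq; apply/seteqP; split => // x; rewrite A_p => ->.
by have := BA q Bq; rewrite A_p => <-.
Qed.

Lemma point_atom p (Up : U p) : atom incl_le (point Up).
Proof. by apply/incl_atomP; exists p. Qed.

Lemma incl_atomistic : atomistic incl_le.
Proof.
move=> A; split => [B [] // | B B_ub p Ap].
have Up := closed_sub (proj2_sig A) Ap.
by apply: (B_ub (point Up)) => //; split => [|x /= ->]; [exact: point_atom|].
Qed.

End ClosureSpace.

Section AtomisticLattice.
Variables (T : Type) (le : T -> T -> Prop).

Lemma Cal0Sym_trans : Cal0Sym le -> forall x y z, le x y -> le y z -> le x z.
Proof. by case=> [[[_ _ le_trans] _ _] _ _ _ _]. Qed.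

Lemma Cal0Sym_top : Cal0Sym le -> exists t, is_top le t.
Proof.
case=> [[_ lubs _] _ _ _ _]; have [t [t_ub _]] := lubs setT.
by exists t => y; exact: t_ub.
Qed.

Lemma Cal0Sym_atomistic : Cal0Sym le -> atomistic le.
Proof. by case. Qed.

Lemma Cal0Sym_coatomistic : Cal0Sym le -> coatomistic le.
Proof. by case. Qed.

Lemma Cal0Sym_coatoms_not_cover : Cal0Sym le -> forall x y, coatom le x -> coatom le y ->
  atoms_below le x `|` atoms_below le y <> atoms le.
Proof. by case. Qed.

Lemma Cal0Sym_atoms_not_cover : Cal0Sym le -> forall p q, atom le p -> atom le q ->
  coatoms_above le p `|` coatoms_above le q <> coatoms le.
Proof. by case. Qed.

Lemma atoms_below_top t : is_top le t -> atoms_below le t = atoms le.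
Proof. by move=> t_top; apply/seteqP; split => [p []|p p_atom]. Qed.

Section ClosedAtomSets.
Hypothesis le_trans : forall x y z, le x y -> le y z -> le x z.
Hypothesis le_atomistic : atomistic le.
Hypothesis le_coatomistic : coatomistic le.
Hypothesis le_top : exists t, is_top le t.
Hypothesis coatoms_not_cover : forall x y, coatom le x -> coatom le y ->
  atoms_below le x `|` atoms_below le y <> atoms le.
Hypothesis atoms_not_cover : forall p q, atom le p -> atom le q ->
  coatoms_above le p `|` coatoms_above le q <> coatoms le.

Lemma Cl_coatoms_top_belowU c (P : Prop) (S : set T) : coatom le c ->
  (forall x, S x <-> atom le x /\ (le x c \/ P)) -> Cl_coatoms_top le S.
Proof.
move=> c_coatom S_def; have [P_true | P_false] := pselect P.
  have [t t_top] := le_top; exists t; split; first by right.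
  rewrite atoms_below_top //; apply/seteqP; split => x; first by move/S_def => [].
  by move=> x_atom; apply/S_def; split => //; right.
exists c; split; first by left.
apply/seteqP; split => x; first by move/S_def => [? [|]].
by move=> [x_atom le_xc]; apply/S_def; split => //; left.
Qed.

Lemma Cl_coatoms_top_proper S : Cl_coatoms_top le S -> S <> atoms le ->
  exists2 a, coatom le a & S = atoms_below le a.
Proof.
move=> [a [[a_coatom|a_top] ->]] S_neq; first by exists a.
by case: S_neq; exact: atoms_below_top.
Qed.

Lemma Cl_coatoms_top_maximal S S' : Cl_coatoms_top le S -> Cl_coatoms_top le S' ->
  S `<=` S' -> S' <> atoms le -> S = S'.
Proof.
move=> [a [a_cl ->]] [b [_ ->]] sub b_neq.
have b_ntop : ~ is_top le b by move/atoms_below_top.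
have le_ab : le a b.
  by have [_ a_lub] := le_atomistic a; apply: a_lub => p /sub [].
case: a_cl => [[_ a_max] | a_top].
  by case: (a_max b le_ab) => [//| ->].
by case: b_ntop => y; exact: le_trans (a_top y) le_ab.
Qed.

Lemma Cl_coatoms_top_full S S' x : Cl_coatoms_top le S -> Cl_coatoms_top le S' ->
  S `<=` S' -> S' x -> ~ S x -> S' = atoms le.
Proof.
move=> S_cl S'_cl sub S'x nSx; apply: contrapT => S'_neq; apply: nSx.
by rewrite (Cl_coatoms_top_maximal S_cl S'_cl sub S'_neq).
Qed.

Lemma Cl_coatoms_top_avoid S S' : Cl_coatoms_top le S -> Cl_coatoms_top le S' ->
  S <> atoms le -> S' <> atoms le -> exists z, [/\ atom le z, ~ S z & ~ S' z].
Proof.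
move=> S_cl S'_cl /(Cl_coatoms_top_proper S_cl) [a a_coatom ->].
move=> /(Cl_coatoms_top_proper S'_cl) [b b_coatom ->].
apply: contrapT => no_z; apply: (coatoms_not_cover a_coatom b_coatom).
apply/seteqP; split => [x [[]|[]] // | x x_atom].
by apply: contrapT => /not_orP [nxa nxb]; apply: no_z; exists x; split => // -[].
Qed.

Lemma coatom_separates p q : atom le p -> atom le q -> p <> q ->
  exists c, [/\ coatom le c, le p c & ~ le q c].
Proof.
move=> [_ p_min] [q_nbot _] neq_pq; apply: contrapT => no_c.
have [_ p_glb] := le_coatomistic p.
have le_qp : le q p.
  by apply: p_glb => c [c_coatom le_pc]; apply: contrapT => nqc; apply: no_c; exists c.
by case: (p_min q le_qp) => // eq_qp; case: neq_pq.
Qed.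

Lemma coatom_avoids p q : atom le p -> atom le q ->
  exists c, [/\ coatom le c, ~ le p c & ~ le q c].
Proof.
move=> p_atom q_atom; apply: contrapT => no_c.
apply: (atoms_not_cover p_atom q_atom); apply/seteqP; split => [c [[]|[]] // | c c_coatom].
apply: contrapT => /not_orP [npc nqc]; apply: no_c; exists c.
by split => // [le_pc | le_qc]; [apply: npc | apply: nqc].
Qed.

End ClosedAtomSets.
End AtomisticLattice.

Section Tensor.
Variables (T1 T2 : Type) (le1 : T1 -> T1 -> Prop) (le2 : T2 -> T2 -> Prop).
Hypotheses (H1 : Cal0Sym le1) (H2 : Cal0Sym le2).

Local Notation Sig := (Sig12 le1 le2).
Local Notation Sig' := (tensor_coatoms le1 le2).
Local Notation L := (tensor le1 le2).
Local Notation tle := (@tensor_le _ _ le1 le2).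

Lemma R1_neq_atoms R p : Sig p -> ~ R p -> R1 R p <> atoms le1.
Proof. by case: p => p1 p2 [p1_atom _] nRp E; rewrite -E in p1_atom. Qed.

Lemma R2_neq_atoms R p : Sig p -> ~ R p -> R2 R p <> atoms le2.
Proof. by case: p => p1 p2 [_ p2_atom] nRp E; rewrite -E in p2_atom. Qed.

Definition cross (c1 : T1) (c2 : T2) : set (T1 * T2) :=
  [set r | Sig r /\ (le1 r.1 c1 \/ le2 r.2 c2)].

Lemma cross_coatom c1 c2 p : coatom le1 c1 -> coatom le2 c2 -> Sig p ->
  ~ le1 p.1 c1 -> ~ le2 p.2 c2 -> Sig' (cross c1 c2).
Proof.
move=> c1_coatom c2_coatom Sp np1 np2; apply: And3; first by move=> r [].
  by move=> E; have := Sp; rewrite -E => -[_ []].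
move=> [q1 q2] [q1_atom q2_atom]; split.
  apply: (Cl_coatoms_top_belowU (Cal0Sym_top H1) (P := le2 q2 c2) c1_coatom) => x.
  by split => [[[]]|[]].
apply: (Cl_coatoms_top_belowU (Cal0Sym_top H2) (P := le1 q1 c1) c2_coatom) => x.
by split => [[[_ x_atom] /or_comm]|[x_atom /or_comm]].
Qed.

Definition separated (X : set (T1 * T2)) : Prop := X `<=` Sig /\
  forall r, Sig r -> ~ X r -> exists R, [/\ Sig' R, X `<=` R & ~ R r].

Lemma tensorP X : L X <-> separated X.
Proof.
split => [[om [om_sub ->]] | [XS X_sep]].
  split => [r [] // | r Sr /not_andP [//|/existsNP [R /not_implyP [omR nRr]]]].
  exists R; split => //; last by move=> x [_]; apply.
  by case: (om_sub R omR) => // R_full; rewrite R_full in nRr.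
exists [set R | Sig' R /\ X `<=` R]; split => [R [] SR _|]; first by left.
apply/seteqP; split => [x Xx | x [Sx x_cap]]; first by split; [exact: XS | move=> R [_]; apply].
apply: contrapT => nXx; have [R [SR XR nRx]] := X_sep x Sx nXx.
by apply: nRx; apply: x_cap.
Qed.

Lemma tensor_of_coatom R : Sig' R -> L R.
Proof. by move=> SR; apply/tensorP; split => [|r _ nRr]; [case: SR | exists R; split]. Qed.

Lemma cross_separates X r c1 c2 : coatom le1 c1 -> coatom le2 c2 -> Sig r ->
  ~ le1 r.1 c1 -> ~ le2 r.2 c2 -> X `<=` cross c1 c2 ->
  exists R, [/\ Sig' R, X `<=` R & ~ R r].
Proof.
move=> c1_coatom c2_coatom Sr nr1 nr2 X_cross; exists (cross c1 c2).
by split => //; [exact: cross_coatom Sr nr1 nr2 | case=> _ []].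
Qed.

Lemma tensor_set0 : L set0.
Proof.
apply/tensorP; split => // r Sr _; have [r1_atom r2_atom] := Sr.
have [c1 [c1_coatom nr1 _]] := coatom_avoids (Cal0Sym_atoms_not_cover H1) r1_atom r1_atom.
have [c2 [c2_coatom nr2 _]] := coatom_avoids (Cal0Sym_atoms_not_cover H2) r2_atom r2_atom.
exact: cross_separates c1_coatom c2_coatom Sr nr1 nr2 (sub0set _).
Qed.

Lemma tensor_set1 p : Sig p -> L [set p].
Proof.
case: p => p1 p2 Sp; have [p1_atom p2_atom] := Sp.
apply/tensorP; split => [x -> // | [r1 r2] Sr neq_rp]; have [r1_atom r2_atom] := Sr.
have [eq1 | neq1] := pselect (p1 = r1).
  subst r1; have neq2 : p2 <> r2 by move=> eq2; apply: neq_rp; rewrite eq2.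
  have [c2 [c2_coatom le_p2 nr2]] :=
    coatom_separates (Cal0Sym_coatomistic H2) p2_atom r2_atom neq2.
  have [c1 [c1_coatom nr1 _]] :=
    coatom_avoids (Cal0Sym_atoms_not_cover H1) p1_atom p1_atom.
  by apply: (cross_separates c1_coatom c2_coatom Sr) => // x ->; split => //; right.
have [c1 [c1_coatom le_p1 nr1]] :=
  coatom_separates (Cal0Sym_coatomistic H1) p1_atom r1_atom neq1.
have [c2 [c2_coatom nr2 _]] :=
  coatom_avoids (Cal0Sym_atoms_not_cover H2) r2_atom r2_atom.
by apply: (cross_separates c1_coatom c2_coatom Sr) => // x ->; split => //; left.
Qed.

Lemma tensor_bigcap (G : set (set (T1 * T2))) : G `<=` L ->
  L [set p | Sig p /\ forall A, G A -> A p].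
Proof.
move=> GL; apply/tensorP; split => [r [] // | r Sr].
move=> /not_andP [// | /existsNP [A /not_implyP [GA nAr]]].
have [_ A_sep] := (tensorP A).1 (GL A GA).
have [R [SR AR nRr]] := A_sep r Sr nAr.
by exists R; split => // x [_ /(_ A GA) /AR].
Qed.

Lemma tensor_closure_space : simple_closure_space Sig L.
Proof.
split; [by move=> A /tensorP [] | exact: tensor_set0 | | exact: tensor_set1 |].
  by apply/tensorP; split => // r Sr /(_ Sr).
exact: tensor_bigcap.
Qed.

Lemma tensor_coatoms_maximal R R' : Sig' R -> Sig' R' -> R `<=` R' -> R = R'.
Proof.
move=> [_ _ R_cl] [R'S R'_neq R'_cl] RR'.
apply/seteqP; split => // -[x y] R'xy; apply: contrapT => nRxy.
have Sxy := R'S _ R'xy; have [[u v] Suv nR'uv] := subset_neq_witness R'S R'_neq.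
have row_y : R1 R' (x, y) = atoms le1.
  exact: @Cl_coatoms_top_full _ _ (Cal0Sym_trans H1) (Cal0Sym_atomistic H1) _ _ x
    (R_cl _ Sxy).1 (R'_cl _ Sxy).1 (fun q => RR' (q, y)) R'xy nRxy.
have row_v : R1 R (u, v) = R1 R' (u, v).
  exact (Cl_coatoms_top_maximal (Cal0Sym_trans H1) (Cal0Sym_atomistic H1)
    (R_cl _ Suv).1 (R'_cl _ Suv).1 (fun q => RR' (q, v)) (R1_neq_atoms Suv nR'uv)).
have [z [z_atom nRzy nRzv]] := Cl_coatoms_top_avoid (Cal0Sym_coatoms_not_cover H1)
  (R_cl _ Sxy).1 (R_cl _ Suv).1 (R1_neq_atoms Sxy nRxy)
  (R1_neq_atoms Suv (fun Ruv => nR'uv (RR' _ Ruv))).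
have Szy : Sig (z, y) := conj z_atom Sxy.2.
have R'zy : R' (z, y) by have : R1 R' (x, y) z by rewrite row_y.
have col_z : R2 R' (z, y) = atoms le2.
  exact: @Cl_coatoms_top_full _ _ (Cal0Sym_trans H2) (Cal0Sym_atomistic H2) _ _ y
    (R_cl _ Szy).2 (R'_cl _ Szy).2 (fun q => RR' (z, q)) R'zy nRzy.
apply: nRzv; change (R1 R (u, v) z); rewrite row_v; change (R2 R' (z, y) v).
by rewrite col_z; case: Suv.
Qed.

Lemma tensor_coatoms_not_cover R R' : Sig' R -> Sig' R' -> ~ Sig `<=` R `|` R'.
Proof.
move=> [RS R_neq R_cl] [R'S R'_neq R'_cl] cover.
have [[u v] Suv nRuv] := subset_neq_witness RS R_neq.
have [[u' v'] Suv' nR'uv'] := subset_neq_witness R'S R'_neq.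
have [z [z_atom nRzv nR'zv']] := Cl_coatoms_top_avoid (Cal0Sym_coatoms_not_cover H1)
  (R_cl _ Suv).1 (R'_cl _ Suv').1 (R1_neq_atoms Suv nRuv) (R1_neq_atoms Suv' nR'uv').
have Szv : Sig (z, v) := conj z_atom Suv.2.
have Szv' : Sig (z, v') := conj z_atom Suv'.2.
have [w [w_atom nRzw nR'zw]] := Cl_coatoms_top_avoid (Cal0Sym_coatoms_not_cover H2)
  (R_cl _ Szv).2 (R'_cl _ Szv').2 (R2_neq_atoms Szv nRzv) (R2_neq_atoms Szv' nR'zv').
by case: (cover (z, w) (conj z_atom w_atom)).
Qed.

Lemma tensor_below_coatom Y : L Y -> Y <> Sig -> exists2 R, Sig' R & Y `<=` R.
Proof.
move=> /tensorP [YS Y_sep] Y_neq; have [r Sr nYr] := subset_neq_witness YS Y_neq.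
by have [R [SR YR _]] := Y_sep r Sr nYr; exists R.
Qed.

Lemma tensor_coatomP (X : tensor_carrier le1 le2) : coatom tle X <-> Sig' (proj1_sig X).
Proof.
have topP := incl_topP tensor_closure_space.
case: X => X LX /=; split => [[X_ntop X_max] | SX].
  have X_neq : X <> Sig by move=> X_full; apply: X_ntop; apply/topP.
  have [R SR XR] := tensor_below_coatom LX X_neq.
  case: (X_max (exist _ R (tensor_of_coatom SR)) XR) => [/topP /= R_full | [<-] //].
  by case: SR => _ /(_ R_full).
split => [/topP /= X_full | [Y LY] /= XY]; first by case: SX => _ /(_ X_full).
have [Y_full | Y_neq] := pselect (Y = Sig); first by left; apply/topP.
have [R SR YR] := tensor_below_coatom LY Y_neq.
have eq_XR := tensor_coatoms_maximal SX SR (subset_trans XY YR).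
by right; apply: incl_eq; apply/seteqP; split => // y /YR; rewrite -eq_XR.
Qed.

Lemma tensor_coatomistic : coatomistic tle.
Proof.
move=> [X LX]; split => [Y [] // | Y Y_lb r Yr].
apply: contrapT => nXr; have [_ X_sep] := (tensorP X).1 LX.
have [R [SR XR nRr]] := X_sep r (closed_sub tensor_closure_space (proj2_sig Y) Yr) nXr.
apply: nRr; apply: (Y_lb (exist _ R (tensor_of_coatom SR))) => //.
by split => //; apply/tensor_coatomP.
Qed.

Lemma tensor_Cal0Sym : Cal0Sym tle.
Proof.
have HL := tensor_closure_space.
split; [exact: incl_complete_lattice HL | exact: incl_atomistic HL | exact: tensor_coatomistic | |].
  move=> X Y /tensor_coatomP SX /tensor_coatomP SY XY_cover.
  apply: (tensor_coatoms_not_cover SX SY) => r Sr.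
  have : atoms tle (point HL Sr) := point_atom HL Sr.
  by rewrite -XY_cover => -[] [_ /(_ r erefl)]; [left | right].
move=> P Q /(incl_atomP HL) [[p1 p2] [Sp P_p]] /(incl_atomP HL) [[q1 q2] [Sq Q_q]] PQ_cover.
have [[p1_atom p2_atom] [q1_atom q2_atom]] := (Sp, Sq).
have [c1 [c1_coatom np1 nq1]] :=
  coatom_avoids (Cal0Sym_atoms_not_cover H1) p1_atom q1_atom.
have [c2 [c2_coatom np2 nq2]] :=
  coatom_avoids (Cal0Sym_atoms_not_cover H2) p2_atom q2_atom.
have S'cross := cross_coatom c1_coatom c2_coatom Sp np1 np2.
have : coatoms tle (exist _ _ (tensor_of_coatom S'cross)) by apply/tensor_coatomP.
rewrite -PQ_cover => -[] [_ /= sub].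
  have Pp : proj1_sig P (p1, p2) by rewrite P_p.
  by have [_ []] := sub _ Pp.
have Qq : proj1_sig Q (q1, q2) by rewrite Q_q.
by have [_ []] := sub _ Qq.
Qed.

End Tensor.

Theorem lemma4p3 (T1 T2 : Type) (le1 : T1 -> T1 -> Prop) (le2 : T2 -> T2 -> Prop)
  (H1 : Cal0Sym le1) (H2 : Cal0Sym le2) :
  [/\ simple_closure_space (Sig12 le1 le2) (tensor le1 le2),
      (* in particular: a complete atomistic lattice whose atoms are the singletons *)
      complete_lattice (@tensor_le _ _ le1 le2) /\
      atomistic (@tensor_le _ _ le1 le2),
      (forall X : tensor_carrier le1 le2,
         atom (@tensor_le _ _ le1 le2) X <->
         exists p, Sig12 le1 le2 p /\ proj1_sig X = [set p]),
      Cal0Sym (@tensor_le _ _ le1 le2) &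
      (* the coatoms are exactly Sigma'_[*] *)
      (forall R, tensor_coatoms le1 le2 R -> tensor le1 le2 R) /\
      (forall X : tensor_carrier le1 le2,
         coatom (@tensor_le _ _ le1 le2) X <-> tensor_coatoms le1 le2 (proj1_sig X))].
Proof.
have HL := tensor_closure_space H1 H2.
split => //.
- by split; [exact: incl_complete_lattice HL | exact: incl_atomistic HL].
- exact: incl_atomP HL.
- exact: tensor_Cal0Sym.
- by split; [exact: tensor_of_coatom | exact: tensor_coatomP].
Qed.
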